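(* For every precise separable two-sorted ultrametric space $X$ there is a uniformly continuous dc-embedding $e\colon X\to\overline{\mathbb U}$.
   Context: A two-sorted ultrametric space is $(X,d_X,D_X)$ with $D_X$ a linear order with least element $0$, $d_X\colon X\times X\to D_X$ symmetric, $d_X(x,y)=0\iff x=y$, $d_X(x,z)\le\max\{d_X(x,y),d_X(y,z)\}$; precise if $d_X$ is onto $D_X$. A dc-embedding is an injection on points with an order embedding $D_f$ of distance sets fixing $0$ such that $d(f(x),f(x'))=D_f(d(x,x'))$. The topology and uniformity of $X$ are generated by the open balls $B_r(a)=\{x:d(x,a)<r\}$, $r\in D_X\setminus\{0\}$; separable means having a countable dense subset. $\mathbb U$ is the countable rational Urysohn ultrametric space viewed as a two-sorted space with distance set $\mathbb Q_{\ge0}$, and $\overline{\mathbb U}$ is its Cauchy completion: the Cauchy complete two-sorted ultrametric space with distance set $\mathbb Q_{\ge0}$ containing $\mathbb U$ as a dense isometric subspace (Cauchy complete: every chain of balls containing, for every $r\in D\setminus\{0\}$, a member contained in some ball of radius $r$ has nonempty intersection). *)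

From Stdlib Require List.
From mathcomp Require Import all_boot all_order all_algebra.
Set Implicit Arguments. Unset Strict Implicit. Unset Printing Implicit Defensive.
Import Order.TTheory GRing.Theory Num.Theory.

Section TwoSorted.
Context {X D : Type} (le : D -> D -> Prop) (z : D) (d : X -> X -> D).

Definition dlt (a b : D) : Prop := le a b /\ a <> b.

Definition linear_order : Prop :=
  [/\ (forall a, le a a),
      (forall a b, le a b -> le b a -> a = b),
      (forall a b c, le a b -> le b c -> le a c)
    & (forall a b, le a b \/ le b a)].

Definition two_sorted_ultrametric : Prop :=
  [/\ linear_order,
      (forall a, le z a),
      (forall x y, d x y = d y x),
      (forall x y, d x y = z <-> x = y)
    & (forall x y w, le (d x w) (d x y) \/ le (d x w) (d y w))].

Definition precise : Prop := forall r : D, exists x y, d x y = r.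

Definition ball (a : X) (r : D) : X -> Prop := fun x => dlt (d x a) r.

(* topology generated by the open balls B_r(a), r in D \ {0}:
   U is open iff every point of U has a basic open neighbourhood inside U,
   basic opens being X itself (empty intersection) or a ball (in an
   ultrametric space finite intersections of balls are balls or empty). *)
Definition is_open (U : X -> Prop) : Prop :=
  forall x, U x ->
    (forall y, U y) \/
    exists a r, r <> z /\ ball a r x /\ (forall y, ball a r y -> U y).

Definition dense (S : X -> Prop) : Prop :=
  forall U, is_open U -> (exists x, U x) -> exists x, U x /\ S x.

Definition countable_set (S : X -> Prop) : Prop :=
  exists f : nat -> option X, forall x, S x <-> exists n, f n = Some x.

Definition separable : Prop :=
  exists S, countable_set S /\ dense S.

Definition entourage (E : X -> X -> Prop) : Prop :=
  exists rs : seq D, (forall r, List.In r rs -> r <> z) /\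
    forall x y, (forall r, List.In r rs -> dlt (d x y) r) -> E x y.

Definition is_ball (B : X -> Prop) : Prop :=
  exists a r, r <> z /\ forall x, B x <-> ball a r x.

Definition chain_of_balls (C : (X -> Prop) -> Prop) : Prop :=
  (forall B, C B -> is_ball B) /\
  (forall B B', C B -> C B' ->
     (forall x, B x -> B' x) \/ (forall x, B' x -> B x)).

Definition cauchy_complete : Prop :=
  forall C, chain_of_balls C ->
    (forall r, r <> z -> exists B, C B /\ exists a, forall x, B x -> ball a r x) ->
    exists x, forall B, C B -> B x.

End TwoSorted.

Section Maps.
Context {X DX Y DY : Type}
  (leX : DX -> DX -> Prop) (zX : DX) (dX : X -> X -> DX)
  (leY : DY -> DY -> Prop) (zY : DY) (dY : Y -> Y -> DY).

Definition dc_embedding (f : X -> Y) (Df : DX -> DY) : Prop :=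
  [/\ (forall x x', f x = f x' -> x = x'),
      (forall a b, leX a b <-> leY (Df a) (Df b)),
      Df zX = zY
    & (forall x x', dY (f x) (f x') = Df (dX x x'))].

Definition uniformly_continuous (f : X -> Y) : Prop :=
  forall E, entourage leY zY dY E ->
    entourage leX zX dX (fun x x' => E (f x) (f x')).

End Maps.

Definition qnn : Type := {q : rat | (0 <= q)%R}.
Definition qle (a b : qnn) : Prop := (sval a <= sval b)%R.
Definition q0 : qnn := exist (fun q : rat => (0 <= q)%R) 0%R (lexx 0%R).

(* The countable rational Urysohn ultrametric space U (as a two-sorted
   space with distance set Q_{>=0}), characterized as the Fraisse limit of
   finite ultrametric spaces with rational distances: a countable
   ultrametric space with Q_{>=0}-valued distances having the one-point
   extension property. *)
Definition rational_urysohn_ultrametric (U : Type) (dU : U -> U -> qnn) : Prop :=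
  [/\ two_sorted_ultrametric qle q0 dU,
      (exists f : nat -> option U, forall x, exists n, f n = Some x)
    & (forall (A : seq U) (q : U -> qnn),
         (forall a, List.In a A -> q a <> q0) ->
         (forall a b, List.In a A -> List.In b A ->
            (qle (dU a b) (q a) \/ qle (dU a b) (q b)) /\
            (qle (q a) (dU a b) \/ qle (q a) (q b))) ->
         exists u, forall a, List.In a A -> dU u a = q a)].

Definition cauchy_completion_of (U : Type) (dU : U -> U -> qnn)
  (Ubar : Type) (dUb : Ubar -> Ubar -> qnn) (iU : U -> Ubar) : Prop :=
  [/\ two_sorted_ultrametric qle q0 dUb,
      cauchy_complete qle q0 dUb,
      (forall x y, dUb (iU x) (iU y) = dU x y)
    & dense qle q0 dUb (fun p => exists x, p = iU x)].

(* Separability and precision make the distance set D countable: every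
   distance is already realised between two points of a dense sequence.  A
   countable linear order with a least element embeds into Q>=0, and by
   forcing ever smaller values at each new minimum of an enumeration the
   embedding De tends to 0 at the bottom of D, which is what uniform
   continuity needs.  Through De, X becomes a rational ultrametric space; the
   one-point extension property of U embeds the dense sequence isometrically
   into U, and Cauchy completeness of Ubar extends this isometry to X. *)

From mathcomp Require Import all_boot all_order all_algebra.
From mathcomp Require Import lra zify.
From Stdlib Require Import Classical ClassicalEpsilon.
From Stdlib Require List.
Set Implicit Arguments. Unset Strict Implicit. Unset Printing Implicit Defensive.
Import Order.TTheory GRing.Theory Num.Theory.

Lemma ltnS_split i n : i < n.+1 -> i = n \/ i < n.
Proof. by rewrite ltnS leq_eqVlt => /orP [/eqP|]; [left|right]. Qed.

Section RecursiveChoice.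
Variables (T : Type) (t0 : T) (good : nat -> (nat -> T) -> T -> Prop).
Hypothesis good_prefix : forall n f f' v,
  (forall i, i < n -> f i = f' i) -> good n f v -> good n f' v.
Hypothesis good_step : forall n f,
  (forall k, k < n -> good k f (f k)) -> exists v, good n f v.

Fixpoint choice_prefix (n : nat) : nat -> T :=
  if n is m.+1 then
    fun i => if i < m then choice_prefix m i
             else epsilon (inhabits t0) (good m (choice_prefix m))
  else fun _ => t0.

Lemma recursive_choice : exists u : nat -> T, forall n, good n u (u n).
Proof.
pose u i := choice_prefix i.+1 i; exists u.
have prefix_u m i : i < m -> choice_prefix m i = u i.
  elim: m => // m IH /ltnS_split [-> //|im].
  by rewrite /= im IH.
elim/ltn_ind=> n IH.
have good_pre : forall k, k < n -> good k (choice_prefix n) (choice_prefix n k).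
  move=> k kn; rewrite prefix_u //; apply: good_prefix (IH k kn) => i ik.
  by rewrite prefix_u // (ltn_trans ik).
have un : good n (choice_prefix n) (u n).
  rewrite /u /= ltnn; apply: epsilon_spec; exact: good_step good_pre.
by apply: good_prefix un => i /prefix_u.
Qed.

End RecursiveChoice.

Lemma ex_attained_max {disp : Order.disp_t} {T : orderType disp} (f : nat -> T)
    (A : nat -> Prop) n :
  (exists2 i, i < n & A i) ->
  exists2 i, i < n /\ A i & forall j, j < n -> A j -> (f j <= f i)%O.
Proof.
elim: n => [[]//|n IH] exA.
case: (classic (exists2 i, i < n & A i)) => [/IH [i [i_n Ai] imax]|none].
  case: (classic (A n /\ (f i <= f n)%O)) => [[An fin]|/not_and_or fni].
    exists n => // j /ltnS_split [->|j_n Aj] //; exact: le_trans (imax j j_n Aj) fin.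
  exists i; first by split=> //; apply: ltnW.
  move=> j /ltnS_split [-> An|]; last exact: imax.
  by case: fni => // /negP; rewrite -ltNge => /ltW.
have An : A n.
  by case: exA => i /ltnS_split [<-|i_n Ai] //; exfalso; apply: none; exists i.
by exists n => // j /ltnS_split [->|j_n Aj] //; exfalso; apply: none; exists j.
Qed.

Section LinearOrder.
Context {D : Type} (le : D -> D -> Prop).
Hypothesis le_lin : linear_order le.

Lemma lin_refl a : le a a. Proof. by case: le_lin. Qed.
Lemma lin_anti a b : le a b -> le b a -> a = b. Proof. by case: le_lin => _ h *; apply: h. Qed.
Lemma lin_trans a b c : le a b -> le b c -> le a c.
Proof. by case: le_lin => _ _ h _; apply: h. Qed.
Lemma lin_total a b : le a b \/ le b a. Proof. by case: le_lin. Qed.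

Lemma dlt_le_trans a b c : dlt le a b -> le b c -> dlt le a c.
Proof.
case=> ab nab bc; split; first exact: lin_trans bc.
by move=> ac; subst; apply: nab; apply: lin_anti.
Qed.

Lemma le_dlt_trans a b c : le a b -> dlt le b c -> dlt le a c.
Proof.
move=> ab [bc nbc]; split; first exact: lin_trans bc.
by move=> ac; subst; apply: nbc; apply: lin_anti.
Qed.

Lemma dlt_trans a b c : dlt le a b -> dlt le b c -> dlt le a c.
Proof. by move=> ab [bc _]; apply: dlt_le_trans bc. Qed.

Lemma dlt_irr a : ~ dlt le a a. Proof. by case. Qed.

Lemma dlt_nle a b : dlt le a b -> ~ le b a.
Proof. by case=> ab nab ba; apply: nab; apply: lin_anti. Qed.

Lemma nle_dlt a b : ~ le a b -> dlt le b a.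
Proof.
move=> nab; split; first by case: (lin_total a b).
by move=> ba; subst; apply: nab; apply: lin_refl.
Qed.

Lemma ndlt_le a b : ~ dlt le a b -> le b a.
Proof. by move=> nab; apply: NNPP => /nle_dlt. Qed.

End LinearOrder.

Section Ultrametric.
Context {X D : Type} (le : D -> D -> Prop) (z : D) (d : X -> X -> D).
Hypothesis HX : two_sorted_ultrametric le z d.

Lemma ultra_lin : linear_order le. Proof. by case: HX. Qed.
Lemma ultra_le0 a : le z a. Proof. by case: HX. Qed.
Lemma dist_sym x y : d x y = d y x. Proof. by case: HX. Qed.
Lemma dist_eq0 x y : d x y = z <-> x = y. Proof. by case: HX. Qed.
Lemma dist_xx x : d x x = z. Proof. exact/dist_eq0. Qed.
Lemma dist_ultra x y w : le (d x w) (d x y) \/ le (d x w) (d y w). Proof. by case: HX. Qed.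

Lemma dlt0 a : ~ dlt le a z.
Proof. by move/(dlt_nle ultra_lin); apply; apply: ultra_le0. Qed.

Lemma dlt_neq0 a t : dlt le a t -> t <> z.
Proof. by move=> h t0; subst; apply: dlt0 h. Qed.

Lemma neq0_dlt a : a <> z -> dlt le z a.
Proof. by move=> a0; split; [apply: ultra_le0 | move=> e; apply: a0]. Qed.

Lemma dist_isosceles x y w : dlt le (d x y) (d y w) -> d x w = d y w.
Proof.
move=> h; have [hle _] := h; apply: (lin_anti ultra_lin).
  by case: (dist_ultra x y w) => [h1|//]; apply: (lin_trans ultra_lin h1 hle).
case: (dist_ultra y x w) => [h1|//].
by exfalso; apply: (dlt_nle ultra_lin h); rewrite (dist_sym x y).
Qed.

Lemma dist_lt_ultra x y w t : dlt le (d x y) t -> dlt le (d y w) t -> dlt le (d x w) t.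
Proof.
by case: (dist_ultra x y w) => h1 h2 h3; apply: (le_dlt_trans ultra_lin h1).
Qed.

Lemma ball_le_sub a b t t' : le t t' -> dlt le (d a b) t' ->
  forall y, ball le d a t y -> ball le d b t' y.
Proof. by move=> tt' ab y ya; apply: dist_lt_ultra ab; apply: (dlt_le_trans ultra_lin ya tt'). Qed.

Definition dense_seq (s : nat -> X) : Prop :=
  forall x t, t <> z -> exists i, dlt le (d x (s i)) t.

Lemma separable_dense_seq (x0 : X) : separable le z d -> exists s, dense_seq s.
Proof.
move=> [S [[f fS] Sdense]]; exists (fun n => odflt x0 (f n)) => x t t0.
have [||y [xy Sy]] := Sdense (ball le d x t).
- by move=> y xy; right; exists x, t.
- by exists x; rewrite /ball dist_xx; apply: neq0_dlt.
have [n fn] := proj1 (fS y) Sy.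
by exists n; rewrite fn dist_sym.
Qed.

Section DenseSeq.
Variable s : nat -> X.
Hypothesis s_dense : dense_seq s.

Lemma dense_seq_dist x y : exists i j, d x y = d (s i) (s j).
Proof.
case: (classic (x = y)) => [<-|xy]; first by exists 0, 0; rewrite !dist_xx.
have t0 : d x y <> z by move/dist_eq0.
have [[i xi] [j yj]] := (s_dense x t0, s_dense y t0).
have siy : d (s i) y = d x y by apply: dist_isosceles; rewrite dist_sym.
have sji : d (s j) (s i) = d y (s i).
  by apply: dist_isosceles; rewrite dist_sym (dist_sym y (s i)) siy.
by exists i, j; rewrite (dist_sym (s i)) sji (dist_sym y) siy.
Qed.

Lemma precise_enumeration : precise d ->
  exists en : nat -> D, en 0 = z /\ forall a, exists n, en n = a.
Proof.
move=> prec; pose ij n := odflt (0, 0) (unpickle n).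
exists (fun n => if n is n'.+1 then d (s (ij n').1) (s (ij n').2) else z).
split=> // a; have [x [y <-]] := prec a; have [i [j ->]] := dense_seq_dist x y.
by exists (pickle (i, j)).+1; rewrite /ij pickleK.
Qed.

End DenseSeq.

Lemma ultrametric_comp {E : Type} (leE : E -> E -> Prop) (zE : E) (De : D -> E) :
  linear_order leE -> (forall r, leE zE r) ->
  (forall a b, le a b <-> leE (De a) (De b)) -> De z = zE ->
  two_sorted_ultrametric leE zE (fun x y => De (d x y)).
Proof.
move=> linE leE0 De_mono De0.
have De_eq0 a : De a = zE -> a = z.
  move=> a0; apply: (lin_anti ultra_lin _ (ultra_le0 a)).
  by apply/De_mono; rewrite a0; apply: leE0.
split=> // [x y|x y|x y w].
- by rewrite dist_sym.
- by rewrite -dist_eq0; split=> [/De_eq0|->].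
- by case: (dist_ultra x y w) => /De_mono; [left|right].
Qed.

End Ultrametric.

Definition vanishing_at_zero {D E : Type} (le : D -> D -> Prop) (z : D)
    (leE : E -> E -> Prop) (zE : E) (De : D -> E) : Prop :=
  forall r, r <> zE ->
    (forall a, a = z) \/ exists2 t, t <> z & forall a, dlt le a t -> dlt leE (De a) r.

Local Open Scope ring_scope.

Lemma ex_rat_between (f : nat -> rat) (B : nat -> Prop) n (m c : rat) : 0 < c ->
  (forall j, (j < n)%N -> B j -> m < f j) ->
  exists v, [/\ m < v, v < m + c & forall j, (j < n)%N -> B j -> v < f j].
Proof.
move=> c0; elim: n => [|n IH] mB; first by exists (m + c / 2); split=> //; lra.
have [|v [mv vc vB]] := IH; first by move=> j j_n; apply: mB; apply: ltnW.
case: (classic (B n)) => Bn; last first.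
  by exists v; split=> // j /ltnS_split [->|/vB].
have mf := mB n (ltnSn n) Bn.
exists (Num.min v ((m + f n) / 2)); split.
- by rewrite lt_min mv /=; lra.
- by rewrite gt_min vc.
- move=> j /ltnS_split [-> _|j_n Bj].
    by rewrite gt_min orbC; apply/orP; left; lra.
  by rewrite gt_min vB.
Qed.

Lemma inv_succ_lt {R : archiFieldType} (r : R) n : 0 < r ->
  (Num.Def.archi_bound r^-1 <= n)%N -> n.+1%:R^-1 < r.
Proof.
move=> r_gt0 rn; have : r^-1 < n.+1%:R.
  apply: lt_le_trans (archi_boundP _) _; first by rewrite invr_ge0 ltW.
  by rewrite ler_nat (leq_trans rn).
by rewrite -[X in _ < X]invrK ltf_pV2 ?posrE ?invr_gt0 ?ltr0n.
Qed.

Lemma qle_lin : linear_order qle.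
Proof.
split=> [a|a b|a b c|a b]; rewrite /qle.
- exact: lexx.
- by move=> ab ba; apply: val_inj; apply: le_anti; rewrite ab ba.
- exact: le_trans.
- by case: (lerP (sval a) (sval b)) => h; [left|right; apply: ltW].
Qed.

Lemma qle0 (r : qnn) : qle q0 r. Proof. exact: valP. Qed.

Lemma qlt_dlt (a b : qnn) : dlt qle a b <-> sval a < sval b.
Proof.
rewrite lt_neqAle; split=> [[ab nab]|/andP [nab ab]]; last first.
  by split=> // e; rewrite e eqxx in nab.
by rewrite ab andbT; apply/eqP => e; apply: nab; apply: val_inj.
Qed.

Lemma qnn_gt0 (r : qnn) : r <> q0 -> 0 < sval r.
Proof. by move=> r0; apply/(qlt_dlt q0); split; [apply: qle0 | move=> e; apply: r0]. Qed.

Section RationalEmbedding.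
Context {D : Type} (le : D -> D -> Prop) (z : D).
Hypotheses (le_lin : linear_order le) (le0 : forall a, le z a).
Variable en : nat -> D.
Hypotheses (en0 : en 0%N = z) (en_surj : forall a, exists n, en n = a).

Definition order_compatible (a b : D) (p q : rat) : Prop :=
  (le a b <-> p <= q) /\ (le b a <-> q <= p).

Lemma order_compatible_sym a b p q :
  order_compatible a b p q -> order_compatible b a q p.
Proof. by case. Qed.

Lemma order_compatible_lt a b p q :
  order_compatible a b p q -> dlt le a b -> p < q.
Proof.
by move=> [_ ba] /(dlt_nle le_lin) nba; rewrite ltNge; apply/negP => /ba.
Qed.

Lemma order_compatible_between a b p q : a <> b ->
  (dlt le a b -> p < q) -> (dlt le b a -> q < p) -> order_compatible a b p q.
Proof.
move=> ab ltp ltq; split; split=> [h|h].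
- by apply: ltW; apply: ltp.
- by apply: NNPP => /(nle_dlt le_lin) /ltq; rewrite ltNge h.
- by apply: ltW; apply: ltq; split=> // e; apply: ab.
- by apply: NNPP => /(nle_dlt le_lin) /ltp; rewrite ltNge h.
Qed.

Definition new_min (n : nat) : Prop :=
  en n <> z /\ forall i, (i < n)%N -> en i <> z -> dlt le (en n) (en i).

(* Index 0 enumerates [z] and receives the value 0, so compatibility with it
   makes all values nonnegative and zero exactly at [z]; the bound at new
   minima is what makes the embedding vanish at [z]. *)
Definition admissible (n : nat) (f : nat -> rat) (v : rat) : Prop :=
  [/\ n = 0%N -> v = 0,
      forall i, (i < n)%N -> order_compatible (en i) (en n) (f i) v
    & new_min n -> v <= n.+1%:R^-1].

Lemma admissible_prefix n f f' v :
  (forall i, (i < n)%N -> f i = f' i) -> admissible n f v -> admissible n f' v.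
Proof. by move=> ff' [v0 comp vmin]; split=> // i i_n; rewrite -ff' //; apply: comp. Qed.

Section Prefix.
Variables (n : nat) (f : nat -> rat).
Hypothesis f_adm : forall k, (k < n)%N -> admissible k f (f k).

Lemma admissible_compatible i j : (i < n)%N -> (j < n)%N ->
  order_compatible (en i) (en j) (f i) (f j).
Proof.
move=> i_n j_n; case: (ltngtP i j) => [ij|ji|->].
- by case: (f_adm j_n) => _ /(_ i ij).
- by case: (f_adm i_n) => _ /(_ j ji) /order_compatible_sym.
- by split; split=> _; [apply: lexx | apply: lin_refl | apply: lexx | apply: lin_refl].
Qed.

Lemma admissible_eq i j : (i < n)%N -> (j < n)%N -> en i = en j -> f i = f j.
Proof.
move=> i_n j_n e; have [[ij _] [ji _]] := admissible_compatible i_n j_n.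
by apply: le_anti; apply/andP; split; [apply/ij | apply/ji]; rewrite e; apply: lin_refl.
Qed.

Lemma admissible_repeat i : (i < n)%N -> en i = en n -> admissible n f (f i).
Proof.
move=> i_n ei; split.
- by move=> n0; rewrite n0 in i_n.
- by move=> j j_n; rewrite -ei; apply: admissible_compatible.
- move=> [nz nmin]; have := nmin i i_n; rewrite ei => /(_ nz) nn.
  by case: (dlt_irr nn).
Qed.

Lemma admissible_fresh : (0 < n)%N -> (forall i, (i < n)%N -> en i <> en n) ->
  exists v, admissible n f v.
Proof.
move=> n_gt0 fresh.
have f0 : f 0%N = 0 by case: (f_adm n_gt0) => /(_ erefl).
have en_nz : en n <> z by rewrite -en0; apply/nesym/fresh.
have [|m [m_n Am] mmax] := @ex_attained_max _ _ f (fun i => dlt le (en i) (en n)) n.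
  by exists 0%N => //; rewrite en0; split=> //; apply/nesym.
have m_lt j : (j < n)%N -> dlt le (en n) (en j) -> f m < f j.
  move=> j_n nj; apply: order_compatible_lt (admissible_compatible m_n j_n) _.
  exact: (dlt_trans le_lin Am nj).
have c_gt0 : 0 < n.+1%:R^-1 :> rat by rewrite invr_gt0.
have [v [mv vc vB]] := ex_rat_between c_gt0 m_lt.
exists v; split.
- by move=> n0; rewrite n0 in n_gt0.
- move=> j j_n; apply: order_compatible_between; first exact: fresh.
    by move=> jn; apply: le_lt_trans (mmax j j_n jn) mv.
  exact: vB.
- move=> [_ nmin]; suff fm0 : f m = 0 by rewrite fm0 add0r in vc; apply: ltW.
  case: (classic (en m = z)) => [em|/(nmin m m_n) /(dlt_nle le_lin)]; last first.
    by case; case: Am.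
  by rewrite -f0; apply: admissible_eq; rewrite ?em.
Qed.

Lemma admissible_step : exists v, admissible n f v.
Proof.
case: (posnP n) => [n0|n_gt0].
  by exists 0; split=> // [i|_]; rewrite n0 // invr_ge0.
case: (classic (exists2 i, (i < n)%N & en i = en n)) => [[i i_n ei]|fresh].
  by exists (f i); apply: admissible_repeat.
by apply: admissible_fresh => // i i_n ei; apply: fresh; exists i.
Qed.

End Prefix.

Lemma new_min_below b : b <> z -> exists n, new_min n /\ le (en n) b.
Proof.
have [n0 <-] := en_surj b; elim/ltn_ind: n0 => n0 IH nz.
case: (classic (new_min n0)) => [nmin|not_min].
  by exists n0; split=> //; apply: lin_refl.
have [i [i_n0 iz /(ndlt_le le_lin) le_i]] :
    exists i, [/\ (i < n0)%N, en i <> z & ~ dlt le (en n0) (en i)].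
  apply: NNPP => none; apply: not_min; split=> // i i_n0 iz.
  by apply: NNPP => nlt; apply: none; exists i.
have [n [nmin le_n]] := IH i i_n0 iz.
by exists n; split=> //; apply: (lin_trans le_lin le_n).
Qed.

Lemma new_min_unbounded : (exists a, a <> z) ->
  (forall m, m <> z -> exists2 b, b <> z & dlt le b m) ->
  forall k, exists n, (k <= n)%N /\ new_min n.
Proof.
move=> [a0 a0z] no_least k.
have [b [bz bmin]] : exists b, b <> z /\ forall i, (i < k)%N -> en i <> z -> le b (en i).
  elim: k => [|k [b [bz bmin]]]; first by exists a0.
  case: (classic (en k <> z /\ ~ le b (en k))) => [[kz nbk]|].
    have [kb _] := nle_dlt le_lin nbk.
    exists (en k); split=> // i /ltnS_split [-> _|i_k iz]; first exact: lin_refl.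
    exact: (lin_trans le_lin kb (bmin i i_k iz)).
  move=> /not_and_or kb; exists b; split=> // i /ltnS_split [-> kz|]; last exact: bmin.
  by case: kb => // /NNPP.
have [c cz cb] := no_least b bz.
have [n [nmin le_n]] := new_min_below cz.
exists n; split=> //; rewrite leqNgt; apply/negP => n_k.
have := bmin n n_k (proj1 nmin).
exact: (dlt_nle le_lin (le_dlt_trans le_lin le_n cb)).
Qed.

Section AdmissibleSeq.
Variable g : nat -> rat.
Hypothesis g_adm : forall n, admissible n g (g n).

Lemma admissible_seq_compatible i j : order_compatible (en i) (en j) (g i) (g j).
Proof.
by apply: (@admissible_compatible (maxn i j).+1) => [k _||]; rewrite ?ltnS ?leq_maxl ?leq_maxr.
Qed.

Lemma admissible_seq0 : g 0%N = 0. Proof. by case: (g_adm 0) => /(_ erefl). Qed.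

Lemma admissible_seq_ge0 i : 0 <= g i.
Proof.
have [[le_0i _] _] := admissible_seq_compatible 0 i.
by rewrite -admissible_seq0; apply/le_0i; rewrite en0; apply: le0.
Qed.

Lemma admissible_seq_vanishing r : 0 < r ->
  (forall a, a = z) \/ exists2 t, t <> z & forall i, dlt le (en i) t -> g i < r.
Proof.
move=> r_gt0; case: (classic (forall a, a = z)) => [|/not_all_ex_not [a0 a0z]]; first by left.
right; case: (classic (exists m, m <> z /\ forall b, b <> z -> le m b)) => [[m [mz mmin]]|].
  exists m => // i im; suff -> : g i = 0 by [].
  rewrite -admissible_seq0; apply: (@admissible_eq i.+1) => //; rewrite en0.
  by apply: NNPP => iz; apply: (dlt_nle le_lin im); apply: mmin.
move=> no_least.
have [|n [kn [nz nmin]]] := new_min_unbounded (ex_intro _ a0 a0z) _ (Num.Def.archi_bound r^-1).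
  move=> m mz; apply: NNPP => none; apply: no_least; exists m; split=> // b bz.
  by apply: NNPP => /(nle_dlt le_lin) bm; apply: none; exists b.
exists (en n) => // i lt_in.
apply: lt_le_trans (order_compatible_lt (admissible_seq_compatible i n) lt_in) _.
case: (g_adm n) => _ _ /(_ (conj nz nmin)) /le_trans; apply; apply: ltW.
exact: inv_succ_lt.
Qed.

End AdmissibleSeq.

Lemma ex_rat_embedding : exists De : D -> qnn,
  [/\ forall a b, le a b <-> qle (De a) (De b), De z = q0 & vanishing_at_zero le z qle q0 De].
Proof.
have [g g_adm] := recursive_choice 0 admissible_prefix admissible_step.
have [idx idxK] := choice _ en_surj.
pose De a : qnn := exist _ (g (idx a)) (admissible_seq_ge0 g_adm (idx a)).
exists De; split.
- move=> a b; have [compat _] := admissible_seq_compatible g_adm (idx a) (idx b).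
  by rewrite !idxK in compat.
- apply: val_inj => /=; rewrite -(admissible_seq0 g_adm).
  apply: (@admissible_eq (idx z).+1 g (fun k _ => g_adm k)) => //.
  by rewrite idxK en0.
- move=> r /qnn_gt0 /(admissible_seq_vanishing g_adm) [|[t tz small]]; first by left.
  by right; exists t => // a a_t; apply/qlt_dlt; apply: small; rewrite idxK.
Qed.

End RationalEmbedding.

Local Close Scope ring_scope.

Section UrysohnSequences.
Variables (U : Type) (dU : U -> U -> qnn).
Hypothesis HU : rational_urysohn_ultrametric dU.
Variables (X : Type) (dX : X -> X -> qnn).
Hypothesis HX : two_sorted_ultrametric qle q0 dX.
Variable s : nat -> X.

Definition isometric_step (n : nat) (u : nat -> U) (v : U) : Prop :=
  forall i, i < n -> dU v (u i) = dX (s n) (s i).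

Lemma isometric_step_prefix n u u' v :
  (forall i, i < n -> u i = u' i) -> isometric_step n u v -> isometric_step n u' v.
Proof. by move=> uu' uv i i_n; rewrite -uu' //; apply: uv. Qed.

Lemma isometric_step_iso n u : (forall k, k < n -> isometric_step k u (u k)) ->
  forall i j, i < n -> j < n -> dU (u i) (u j) = dX (s i) (s j).
Proof.
have [HUm _ _] := HU; move=> u_step i j i_n j_n.
case: (ltngtP i j) => [ij|ji|->]; last by rewrite (dist_xx HUm) (dist_xx HX).
- by rewrite (dist_sym HUm) (u_step j j_n i ij) (dist_sym HX).
- exact: u_step.
Qed.

Lemma isometric_step_ex n u : (forall k, k < n -> isometric_step k u (u k)) ->
  exists v, isometric_step n u v.
Proof.
have [HUm _ HUext] := HU; move=> /isometric_step_iso u_iso.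
case: (classic (exists2 i, i < n & s i = s n)) => [[i i_n e]|fresh].
  by exists (u i) => j j_n; rewrite u_iso // e.
pose A := List.map u (List.seq 0 n).
have inA a : List.In a A -> exists2 i, i < n & u i = a.
  by move=> /List.in_map_iff [i [ui /List.in_seq i_n]]; exists i => //; lia.
have [idx idxP] : exists idx : U -> nat,
    forall a, List.In a A -> idx a < n /\ u (idx a) = a.
  apply: (choice (fun a i => List.In a A -> i < n /\ u i = a)) => a.
  case: (classic (List.In a A)) => [/inA [i i_n ui]|nA]; first by exists i.
  by exists 0.
have Ain i : i < n -> List.In (u i) A.
  by move=> i_n; apply: List.in_map; apply/List.in_seq; lia.
pose q a := dX (s n) (s (idx a)).
have q_u i : i < n -> q (u i) = dX (s n) (s i).
  move=> i_n; have [j_n uj] := idxP _ (Ain i i_n).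
  have : dU (u (idx (u i))) (u i) = q0 by rewrite uj (dist_xx HUm).
  by rewrite u_iso // => /(dist_eq0 HX) sji; rewrite /q sji.
have [||v vq] := HUext A q.
- move=> a /inA [i i_n <-]; rewrite q_u // => /(dist_eq0 HX) ni.
  by apply: fresh; exists i.
- move=> a b /inA [i i_n <-] /inA [j j_n <-]; rewrite !q_u // u_iso //.
  split; [rewrite (dist_sym HX (s n) (s i)) | rewrite (dist_sym HX (s i) (s j))].
  + exact: (dist_ultra HX (s i) (s n) (s j)).
  + by case: (dist_ultra HX (s n) (s j) (s i)); [right|left].
by exists v => i i_n; rewrite vq ?q_u //; apply: Ain.
Qed.

Lemma urysohn_seq_embedding : exists u : nat -> U,
  forall i j, dU (u i) (u j) = dX (s i) (s j).
Proof.
have [_ _ HUext] := HU.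
have [u0 _] := HUext [::] (fun _ => q0) (fun _ (h : List.In _ [::]) => match h with end)
  (fun _ _ (h : List.In _ [::]) => match h with end).
have [u u_step] := recursive_choice u0 isometric_step_prefix isometric_step_ex.
exists u => i j; apply: (@isometric_step_iso (maxn i j).+1) => [k _||];
  by rewrite ?ltnS ?leq_maxl ?leq_maxr.
Qed.

End UrysohnSequences.

Section Extension.
Context {X Y E : Type} (leE : E -> E -> Prop) (zE : E).
Variables (dX : X -> X -> E) (dY : Y -> Y -> E).
Hypotheses (HX : two_sorted_ultrametric leE zE dX) (HY : two_sorted_ultrametric leE zE dY).
Hypothesis Y_complete : cauchy_complete leE zE dY.
Variables (s : nat -> X) (phi : nat -> Y).
Hypothesis s_dense : dense_seq leE zE dX s.
Hypothesis phi_iso : forall i j, dY (phi i) (phi j) = dX (s i) (s j).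

Lemma extension_point x : exists p, forall i, dY p (phi i) = dX x (s i).
Proof.
have linE := ultra_lin HX.
pose C B := exists i t, dlt leE (dX x (s i)) t /\ B = ball leE dY (phi i) t.
have C_sub i j t t' : dlt leE (dX x (s i)) t -> dlt leE (dX x (s j)) t' -> leE t t' ->
    forall y, ball leE dY (phi i) t y -> ball leE dY (phi j) t' y.
  move=> xi xj tt'; apply: (ball_le_sub HY tt'); rewrite phi_iso.
  by apply: (dist_lt_ultra HX _ xj); rewrite (dist_sym HX); apply: (dlt_le_trans linE xi).
have [p p_in] : exists p, forall B, C B -> B p.
  apply: Y_complete; first split.
  - move=> B [i [t [xi ->]]]; exists (phi i), t; split=> //; exact: (dlt_neq0 HX xi).
  - move=> B B' [i [t [xi ->]]] [j [t' [xj ->]]].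
    by case: (lin_total linE t t') => tt'; [left|right]; apply: C_sub.
  move=> r r0; have [i xi] := s_dense x r0.
  by exists (ball leE dY (phi i) r); split; [exists i, r | exists (phi i)].
exists p => i; case: (classic (dX x (s i) = zE)) => [xi0|xi0].
  rewrite xi0; apply: NNPP => p0.
  have : ball leE dY (phi i) (dY p (phi i)) p.
    by apply: p_in; exists i, (dY p (phi i)); rewrite xi0; split=> //; apply: (neq0_dlt HY p0).
  exact: dlt_irr.
have [j xj] := s_dense x xi0.
have pj : ball leE dY (phi j) (dX x (s i)) p by apply: p_in; exists j, (dX x (s i)).
have sji : dX (s j) (s i) = dX x (s i) by apply: (dist_isosceles HX); rewrite (dist_sym HX).
have lt_pj : dlt leE (dY p (phi j)) (dY (phi j) (phi i)) by rewrite phi_iso sji.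
by rewrite (dist_isosceles HY lt_pj) phi_iso sji.
Qed.

Lemma isometric_extension : exists e : X -> Y, forall x y, dY (e x) (e y) = dX x y.
Proof.
have [e eP] := choice _ extension_point; exists e => x y.
case: (classic (x = y)) => [<-|xy]; first by rewrite (dist_xx HY) (dist_xx HX).
have [i xi] := s_dense x (fun e0 => xy (proj1 (dist_eq0 HX x y) e0)).
have siy : dX (s i) y = dX x y by apply: (dist_isosceles HX); rewrite (dist_sym HX).
have lt_xi : dlt leE (dY (e x) (phi i)) (dY (phi i) (e y)).
  by rewrite eP (dist_sym HY) eP (dist_sym HX y) siy.
by rewrite (dist_isosceles HY lt_xi) (dist_sym HY) eP (dist_sym HX) siy.
Qed.

End Extension.

Section DistanceTransfer.
Context {X D Y E : Type} (le : D -> D -> Prop) (z : D) (d : X -> X -> D).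
Context (leE : E -> E -> Prop) (zE : E) (dY : Y -> Y -> E).
Hypotheses (HX : two_sorted_ultrametric le z d) (linE : linear_order leE).
Hypothesis leE0 : forall r, leE zE r.
Variable De : D -> E.
Hypotheses (De_mono : forall a b, le a b <-> leE (De a) (De b)) (De0 : De z = zE).
Hypothesis De_vanishing : vanishing_at_zero le z leE zE De.

Lemma neq0_dltE r : r <> zE -> dlt leE zE r.
Proof. by move=> r0; split=> // e; apply: r0. Qed.

Lemma dense_seq_comp s : dense_seq le z d s -> dense_seq leE zE (fun x y => De (d x y)) s.
Proof.
move=> s_dense x r /[dup] r0 /De_vanishing [triv|[t t0 small]].
  by exists 0; rewrite (triv (d x (s 0))) De0; apply: neq0_dltE.
by have [i xi] := s_dense x t t0; exists i; apply: small.
Qed.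

Section Embedding.
Variable e : X -> Y.
Hypothesis e_dist : forall x y, dY (e x) (e y) = De (d x y).

Lemma dc_embedding_of_dist : dc_embedding le z d leE zE dY e De.
Proof.
split=> [x y exy|//|//|//]; apply/(dist_eq0 HX); apply: (lin_anti (ultra_lin HX)).
  by apply/De_mono; rewrite -e_dist exy e_dist (dist_xx HX) De0; apply: lin_refl.
exact: (ultra_le0 HX).
Qed.

Lemma uniformly_continuous_of_dist : uniformly_continuous le z d leE zE dY e.
Proof.
move=> Ent [rs [rs0 Ent_rs]].
case: (classic (forall a, a = z)) => [triv|/not_all_ex_not [a0 a0z]].
  exists [::]; split=> // x y _; apply: Ent_rs => r /rs0 r0.
  by rewrite e_dist (triv (d x y)) De0; apply: neq0_dltE.
have [tr trP] : exists tr : E -> D, forall r,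
    tr r <> z /\ (r <> zE -> forall a, dlt le a (tr r) -> dlt leE (De a) r).
  apply: (choice (fun r t => t <> z /\ (r <> zE -> forall a, dlt le a t -> dlt leE (De a) r))).
  move=> r; case: (classic (r = zE)) => [->|/De_vanishing [triv|[t t0 small]]].
  - by exists a0.
  - by exfalso; apply: a0z.
  - by exists t.
exists (List.map tr rs); split.
  by move=> t /List.in_map_iff [r [<- _]]; case: (trP r).
move=> x y small; apply: Ent_rs => r r_rs; rewrite e_dist.
by apply: (proj2 (trP r) (rs0 r r_rs)); apply: small; apply: List.in_map.
Qed.

End Embedding.
End DistanceTransfer.

Theorem corollary3p22
  (U : Type) (dU : U -> U -> qnn)
  (Ubar : Type) (dUb : Ubar -> Ubar -> qnn) (iU : U -> Ubar) :
  rational_urysohn_ultrametric dU ->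
  cauchy_completion_of dU dUb iU ->
  forall (X D : Type) (le : D -> D -> Prop) (z : D) (d : X -> X -> D),
    two_sorted_ultrametric le z d ->
    precise d ->
    separable le z d ->
    exists (e : X -> Ubar) (De : D -> qnn),
      dc_embedding le z d qle q0 dUb e De /\
      uniformly_continuous le z d qle q0 dUb e.
Proof.
move=> HU [HUb Ub_complete iU_iso _] X D le z d HX prec sep.
have [x0 _] := prec z.
have [s s_dense] := separable_dense_seq HX x0 sep.
have [en [en0 en_surj]] := precise_enumeration HX s_dense prec.
have [De [De_mono De0 De_van]] := ex_rat_embedding (ultra_lin HX) (ultra_le0 HX) en0 en_surj.
have HQ := ultrametric_comp HX qle_lin qle0 De_mono De0.
have [u u_iso] := urysohn_seq_embedding HU HQ s.
have [e e_iso] := isometric_extension HQ HUb Ub_complete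
  (dense_seq_comp qle0 De0 De_van s_dense) (phi := fun i => iU (u i))
  (fun i j => etrans (iU_iso _ _) (u_iso i j)).
exists e, De; split.
- exact: (dc_embedding_of_dist HX qle_lin De_mono De0 e_iso).
- exact: (uniformly_continuous_of_dist qle0 De0 De_van e_iso).
Qed.
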